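(* Let $m \ge \ell \ge k \ge 1$ and let ${\mathcal{C}} = {\mathcal{C}}[\ell+m,\ell,k]$ be constructed as in the context, for any choice of design parameters $h \in \{0,\dots,k-1\}$ at every level of the recursion. Then every element of ${\mathcal{C}}$ is an $\ell$-dimensional subspace of $W$, and for all $U,V\in{\mathcal{C}}$ with $U\neq V$ we have $\dim(U\cap V)\le k-1$. Consequently $d(U,V)\ge 2(\ell-k+1)$ for all distinct $U,V\in{\mathcal{C}}$.
   Context: Let $q$ be a prime power. Subspace distance: for subspaces $U,V$ of an $\mathbb{F}_q$-vector space, $d(U,V) = \dim U + \dim V - 2\dim(U\cap V)$. Kötter–Kschischang code ${\mathcal{K}}[n,\ell,k]$ (for $n-\ell \ge \ell \ge k \ge 1$): put $m=n-\ell$, $\mathbb{F}=\mathbb{F}_{q^m}$, fix $\mathbb{F}_q$-linearly independent $\alpha_1,\dots,\alpha_\ell \in \mathbb{F}$, let $\langle A\rangle$ be their $\mathbb{F}_q$-span and $W = \langle A\rangle \times \mathbb{F}$ (an $n$-dimensional $\mathbb{F}_q$-space, vectors written $(v_1,v_2)$). For a linearized polynomial $f(x)=\sum_{i=0}^{k-1} f_i x^{q^i}$ with $f_i\in\mathbb{F}$, let ${\mathcal{E}}(f)=\mathrm{span}_{\mathbb{F}_q}\{(\alpha_i,f(\alpha_i)) : 1\le i\le \ell\}$, and ${\mathcal{K}}[n,\ell,k]=\{{\mathcal{E}}(f)\}$. It is known that $|{\mathcal{K}}[n,\ell,k]| = q^{mk}$ and that distinct elements of ${\mathcal{K}}$ intersect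 in dimension at most $k-1$. Any $n$-dimensional $\mathbb{F}_q$-space is identified with such a $W$ via a fixed linear isomorphism. Recursive code ${\mathcal{C}}[\ell+m,\ell,k]$ (for $m\ge \ell \ge k$), in $W=\langle A\rangle\times\mathbb{F}$, $\mathbb{F}=\mathbb{F}_{q^m}$: choose a design parameter $h=h_{\ell+m}\in\{0,\dots,k-1\}$. If $m<2(\ell-h)$ or $\ell-h<k$, set ${\mathcal{C}}={\mathcal{K}}[\ell+m,\ell,k]$. Otherwise let ${\mathcal{C}}[m,\ell-h,k]=\{U_1,\dots,U_N\}$ be the recursively constructed code inside $\mathbb{F}$ (viewed as an $m$-dimensional $\mathbb{F}_q$-space), $N$ its size, and fix a basis $e^\sigma_1,\dots,e^\sigma_{\ell-h}$ of each $U_\sigma$. If $h>0$, let $t=\min\{\lfloor \ell/h\rfloor, N\}$ and $S_\sigma=\{(\alpha_j,0) : (\sigma-1)h+1\le j\le \sigma h\}$; if $h=0$, let $t=N$ and $S_\sigma=\emptyset$. Let $T_\sigma=\{(0,e^\sigma_j): 1\le j\le \ell-h\}$, $V_\sigma=\mathrm{span}(S_\sigma\cup T_\sigma)$ for $1\le\sigma\le t$, ${\mathcal{B}}=\{V_\sigma\}$, and ${\mathcal{C}}={\mathcal{K}}[\ell+m,\ell,k]\cup{\mathcal{B}}$. *)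

From HB Require Import structures.
From mathcomp Require Import all_boot all_order all_algebra all_field.
Set Implicit Arguments. Unset Strict Implicit. Unset Printing Implicit Defensive.
Import GRing.Theory.
Local Open Scope ring_scope.

(* K plays the role of F_q (q = #|K|); a field L : fieldExtType K with
   \dim {:L} = m plays the role of F = F_{q^m}. *)

Definition subspace_dist (K : fieldType) (vT : vectType K) (U V : {vspace vT}) : nat :=
  (\dim U + \dim V - 2 * \dim (U :&: V))%N.

Definition linpoly (K : finFieldType) (L : fieldExtType K) (k : nat)
  (c : 'I_k -> L) (x : L) : L :=
  \sum_(i < k) c i * x ^+ (#|K| ^ i).

(* The KK codeword E(f) = span{(alpha_i, f(alpha_i))}, transported to the
   ambient space vT by the fixed linear isomorphism phi : W -> vT. *)
Definition KKel (K : finFieldType) (L : fieldExtType K) (vT : vectType K)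
  (phi : 'Hom((L * L)%type, vT)) (A : seq L) (k : nat) (c : 'I_k -> L)
  : {vspace vT} :=
  (phi @: <<[seq (a, linpoly c a) | a <- A]>>)%VS.

(* Shared data of one level of the construction: F = L = F_{q^m}, the
   F_q-independent alpha_1..alpha_l (the list A), the linear isomorphism
   phi from W = <A> x F onto the ambient space vT, and an enumeration s of
   the Koetter--Kschischang code K[l+m,l,k]. *)
Definition KKdata (K : finFieldType) (vT : vectType K) (l m k : nat)
  (L : fieldExtType K) (A : seq L) (phi : 'Hom((L * L)%type, vT))
  (s : seq {vspace vT}) : Prop :=
  [/\ \dim {:L} = m, size A = l, free A,
      ((forall v w : (L * L)%type, v.1 \in <<A>>%VS -> w.1 \in <<A>>%VS ->
          phi v = phi w -> v = w) /\
      (forall y : vT, exists v : (L * L)%type, v.1 \in <<A>>%VS /\ phi v = y))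
    & (forall U, U \in s <-> exists c : 'I_k -> L, U = KKel phi A c)].

(* RecCode K vT l m k C : C (as a list of subspaces of the (l+m)-dimensional
   space vT) is a code C[l+m,l,k] obtained by the recursive construction,
   for some choice of the design parameter h at every level (and of all the
   other "fixed" choices: alphas, identifications, enumerations, bases). *)
Unset Implicit Arguments.
Inductive RecCode (K : finFieldType) :
    forall (vT : vectType K), nat -> nat -> nat -> seq {vspace vT} -> Prop :=
| RecCode_base (vT : vectType K) (l m k h : nat) (L : fieldExtType K) (A : seq L)
    (phi : 'Hom((L * L)%type, vT)) (s : seq {vspace vT}) :
    KKdata l m k A phi s -> (h < k)%N ->
    ((m < 2 * (l - h)) || (l - h < k))%N ->
    RecCode K vT l m k s
| RecCode_rec (vT : vectType K) (l m k h : nat) (L : fieldExtType K) (A : seq L)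
    (phi : 'Hom((L * L)%type, vT)) (s : seq {vspace vT})
    (D : seq {vspace L}) (e : nat -> seq L) :
    KKdata l m k A phi s -> (h < k)%N ->
    ~~ ((m < 2 * (l - h)) || (l - h < k))%N ->
    RecCode K L (l - h) (m - (l - h)) k D ->
    (* N = |C[m,l-h,k]|, U_sigma = nth sigma (undup D); t as in the paper *)
    let N := size (undup D) in
    let t := if (0 < h)%N then minn (l %/ h) N else N in
    (forall sigma, (sigma < t)%N ->
        size (e sigma) = (l - h)%N /\ basis_of (nth 0%VS (undup D) sigma) (e sigma)) ->
    let V sigma : {vspace vT} :=
      (phi @: <<[seq (nth (0%R : L) A j, (0%R : L)) | j <- iota (sigma * h) h]
               ++ [seq ((0%R : L), x) | x <- e sigma]>>)%VS in
    RecCode K vT l m k (s ++ [seq V sigma | sigma <- iota 0 t]).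
Set Implicit Arguments.

(* Write W = <A> x F (here L = F_{q^m}, A = alpha_1..alpha_l).  A codeword
   E(f) of the Koetter--Kschischang code is the graph of the q-linear map f
   over A, and a codeword V_sigma of the extension is a "block"
   <S_sigma> x 0 + 0 x U_sigma.  We therefore prove, for subspaces of a product
   uT x vT:
   - a graph over a free family has the dimension of its first projection,
     and two graphs of distinct q-polynomials of q-degree < k meet in
     dimension < k, because the first projection of the intersection is a
     subspace of roots of the nonzero difference polynomial;
   - a block meets a graph in dimension at most dim <S_sigma> = h < k, and two
     blocks with independent windows S_sigma, S_tau meet as U_sigma and U_tau
     do, hence in dimension < k by induction on the construction.
   These bounds are transported to the ambient space by the fixed map phi,
   which is injective on W. *)

From HB Require Import structures.
From mathcomp Require Import all_boot all_order all_algebra all_field zify.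
Set Implicit Arguments. Unset Strict Implicit. Unset Printing Implicit Defensive.
Import GRing.Theory.
Local Open Scope ring_scope.

(* Over the finite field K with q elements, x |-> x^(q^i) is K-linear on any
   extension L; hence so is every q-polynomial (linpoly), which is the
   evaluation of the ordinary polynomial linpoly_poly of degree <= q^(k-1). *)
Section QPower.
Variables (K : finFieldType) (L : fieldExtType K).

Lemma qpowD (x y : L) i : (x + y) ^+ (#|K| ^ i) = x ^+ (#|K| ^ i) + y ^+ (#|K| ^ i).
Proof.
have [p _ pcharK] := finPcharP K; rewrite (card_pprimeChar pcharK) -expnM.
have pcharL : p \in [pchar L] by rewrite (pchar_lalg L).
elim: (_ * i)%N => [|n IHn]; first by rewrite !expr1.
by rewrite expnSr !exprM IHn -!(pFrobenius_autE pcharL) rmorphD.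
Qed.

Lemma qpowZ (a : K) (x : L) i : (a *: x) ^+ (#|K| ^ i) = a *: x ^+ (#|K| ^ i).
Proof.
rewrite exprZn; congr (_ *: _).
by elim: i => [|i IH]; rewrite ?expr1 // expnSr exprM IH expf_card.
Qed.

Variables (k : nat) (c : 'I_k -> L).

Lemma linpoly_is_zmod_morphism : zmod_morphism (linpoly c).
Proof.
move=> x y; rewrite /linpoly -sumrB; apply: eq_bigr => i _.
rewrite -mulrBr; congr (_ * _).
by rewrite -[in RHS](subrK y x) (qpowD (x - y) y) addrK.
Qed.

Lemma linpoly_is_scalable : scalable (linpoly c).
Proof.
move=> a x; rewrite /linpoly scaler_sumr; apply: eq_bigr => i _.
by rewrite qpowZ scalerAr.
Qed.

HB.instance Definition _ :=
  GRing.isZmodMorphism.Build L L (linpoly c) linpoly_is_zmod_morphism.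
HB.instance Definition _ :=
  GRing.isScalable.Build K L L *:%R (linpoly c) linpoly_is_scalable.

Definition linpoly_poly : {poly L} := \sum_(i < k) c i *: 'X^(#|K| ^ i).

Lemma horner_linpoly_poly x : linpoly_poly.[x] = linpoly c x.
Proof.
rewrite horner_sum; apply: eq_bigr => i _.
by rewrite hornerZ hornerXn.
Qed.

Lemma size_linpoly_poly : (size linpoly_poly <= (#|K| ^ k.-1).+1)%N.
Proof.
apply: leq_trans (size_sum _ _ _) _; apply/bigmax_leqP => i _.
apply: leq_trans (size_scale_leq _ _) _; rewrite size_polyXn ltnS.
by rewrite leq_exp2l ?finNzRing_gt1 // -ltnS prednK // (leq_trans _ (ltn_ord i)).
Qed.
End QPower.

(* A nonzero polynomial vanishing on a K-subspace Z of L has more than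
   q^(dim Z) coefficients, since Z has q^(dim Z) elements. *)
Lemma roots_in_subspace (K : finFieldType) (L : fieldExtType K)
    (P : {poly L}) (Z : {vspace L}) :
  P != 0 -> {in Z, forall z, root P z} -> (#|K| ^ \dim Z < size P)%N.
Proof.
move=> nzP rootZ; set d := \dim Z; pose b := vbasis Z.
pose comb (f : {ffun 'I_d -> K}) := \sum_(i < d) f i *: b`_i.
have comb_inj : injective comb.
  move=> f1 f2 eq12; apply/ffunP => j; have freeb := basis_free (vbasisP Z).
  by rewrite -(coord_sum_free (fun i => f1 i) j freeb) -/(comb f1) eq12 coord_sum_free.
have := @max_poly_roots _ P (map comb (enum {ffun 'I_d -> K})) nzP.
rewrite size_map -cardE card_ffun card_ord; apply; last first.
  by rewrite map_inj_uniq ?enum_uniq.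
apply/allP => _ /mapP [f _ ->]; apply: rootZ; apply: rpred_sum => i _.
by apply/rpredZ/vbasis_mem/mem_nth; rewrite size_tuple.
Qed.

Section ProductSpaces.
Variables (K : fieldType) (uT vT : vectType K).
Implicit Types (X : seq (uT * vT)) (A B : seq uT) (E : seq vT).

Definition fstH : 'Hom((uT * vT)%type, uT) := linfun fst.
Definition sndH : 'Hom((uT * vT)%type, vT) := linfun snd.

Lemma fst_span X w : w \in <<X>>%VS -> w.1 \in <<map fst X>>%VS.
Proof.
move=> wX; have := memv_img fstH wX; rewrite limg_span lfunE /=.
by rewrite (eq_map (@lfunE _ _ _ fst)).
Qed.

Lemma snd_span X w : w \in <<X>>%VS -> w.2 \in <<map snd X>>%VS.
Proof.
move=> wX; have := memv_img sndH wX; rewrite limg_span lfunE /=.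
by rewrite (eq_map (@lfunE _ _ _ snd)).
Qed.

Lemma pair_eq0 (w : uT * vT) : w.1 = 0 -> w.2 = 0 -> w = 0.
Proof. by case: w => /= a b -> ->. Qed.

Definition graph (f : {linear uT -> vT}) A : {vspace uT * vT} :=
  <<[seq (a, f a) | a <- A]>>%VS.

Section Graph.
Variables (f : {linear uT -> vT}) (A : seq uT).

Lemma mem_graph w : w \in graph f A -> w.2 = f w.1.
Proof.
pose g := (sndH - (linfun f \o fstH))%VF.
have /subvP graph_ker : (graph f A <= lker g)%VS.
  apply/span_subvP => _ /mapP [a _ ->].
  by rewrite memv_ker !(add_lfunE, opp_lfunE, comp_lfunE, lfunE) /= subrr.
move=> /graph_ker; rewrite memv_ker !(add_lfunE, opp_lfunE, comp_lfunE, lfunE) /=.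
by rewrite subr_eq0 => /eqP.
Qed.

Lemma dim_fst_graph U : (U <= graph f A)%VS -> \dim (fstH @: U) = \dim U.
Proof.
move=> /subvP sUG; apply: limg_dim_eq; apply/eqP; rewrite -subv0.
apply/subvP => w; rewrite memv_cap memv_ker lfunE memv0 => /andP [/sUG wG /eqP w1].
by apply/eqP/pair_eq0; rewrite // (mem_graph wG) w1 linear0.
Qed.

Lemma fst_graph : (fstH @: graph f A)%VS = <<A>>%VS.
Proof.
rewrite limg_span -map_comp; congr <<_>>%VS.
by elim: A => //= a s ->; rewrite lfunE.
Qed.

Lemma graph_fst w : w \in graph f A -> w.1 \in <<A>>%VS.
Proof. by move=> /(memv_img fstH); rewrite fst_graph lfunE. Qed.

Lemma dim_graph : \dim (graph f A) = \dim <<A>>.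
Proof. by rewrite -fst_graph dim_fst_graph. Qed.
End Graph.

Definition block B (E : seq vT) : {vspace uT * vT} :=
  <<[seq (b, 0%R) | b <- B] ++ [seq (0%R, x) | x <- E]>>%VS.

Lemma span_zeros (wT : vectType K) (T : eqType) (s : seq T) :
  (<<[seq 0%R | _ <- s]>> = 0 :> {vspace wT})%VS.
Proof.
by apply/eqP; rewrite -subv0; apply/span_subvP => v /mapP [? _ ->]; rewrite mem0v.
Qed.

Lemma mem_span_inl B (w : uT * vT) :
  w \in <<[seq (b, 0%R) | b <- B]>>%VS -> w.1 \in <<B>>%VS /\ w.2 = 0.
Proof.
move=> wS; split; first by move: (fst_span wS); rewrite -map_comp map_id_in.
by move: (snd_span wS); rewrite -map_comp span_zeros memv0 => /eqP.
Qed.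

Lemma mem_span_inr (E : seq vT) (w : uT * vT) :
  w \in <<[seq (0%R, x) | x <- E]>>%VS -> w.1 = 0 /\ w.2 \in <<E>>%VS.
Proof.
move=> wT; split; last by move: (snd_span wT); rewrite -map_comp map_id_in.
by move: (fst_span wT); rewrite -map_comp span_zeros memv0 => /eqP.
Qed.

Lemma mem_block B E w : w \in block B E -> w.1 \in <<B>>%VS /\ w.2 \in <<E>>%VS.
Proof.
rewrite /block span_cat => /memv_addP [s /mem_span_inl [s1 s2] [t /mem_span_inr [t1 t2] ->]].
by rewrite /= s2 t1 addr0 add0r.
Qed.

(* The two halves of a block form a direct sum. *)
Lemma dim_block B E : \dim (block B E) = (\dim <<B>> + \dim <<E>>)%N.
Proof.
rewrite /block span_cat.
set S := <<[seq (b, 0%R) | b <- B]>>%VS; set T := <<[seq (0%R, x) | x <- E]>>%VS.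
have capST : (S :&: T = 0)%VS.
  apply/eqP; rewrite -subv0; apply/subvP => w /memv_capP [wS wT].
  by rewrite memv0; apply/eqP/pair_eq0; [case: (mem_span_inr wT) | case: (mem_span_inl wS)].
have dimS : \dim S = \dim <<B>>.
  rewrite -(limg_dim_eq (f := fstH)); last first.
    apply/eqP; rewrite -subv0; apply/subvP => w; rewrite memv_cap memv_ker lfunE memv0.
    by case/andP => /mem_span_inl [_ w2] /eqP w1; apply/eqP/pair_eq0.
  by rewrite limg_span -map_comp (eq_map (fun b => lfunE _ (b, 0))) map_id_in.
have dimT : \dim T = \dim <<E>>.
  rewrite -(limg_dim_eq (f := sndH)); last first.
    apply/eqP; rewrite -subv0; apply/subvP => w; rewrite memv_cap memv_ker lfunE memv0.
    by case/andP => /mem_span_inr [w1 _] /eqP w2; apply/eqP/pair_eq0.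
  by rewrite limg_span -map_comp (eq_map (fun x => lfunE _ (0, x))) map_id_in.
by rewrite -dimS -dimT -dimv_sum_cap capST dimv0 addn0.
Qed.

(* A block meets a graph in dimension at most dim <<B>>: first projection. *)
Lemma dim_block_cap_graph B E (f : {linear uT -> vT}) A :
  (\dim (block B E :&: graph f A) <= \dim <<B>>)%N.
Proof.
rewrite -(dim_fst_graph (capvSr _ _)); apply/dimvS/subvP => _ /memv_imgP [w wBG ->].
by rewrite lfunE; case: (mem_block (memv_capP wBG).1).
Qed.

(* Blocks with independent first parts meet in dimension at most the
   intersection of their second parts: the second projection is injective. *)
Lemma dim_block_cap B1 E1 B2 E2 : (<<B1>> :&: <<B2>> = 0)%VS ->
  (\dim (block B1 E1 :&: block B2 E2) <= \dim (<<E1>> :&: <<E2>>))%N.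
Proof.
move=> capB; rewrite -(limg_dim_eq (f := sndH)); last first.
  apply/eqP; rewrite -subv0; apply/subvP => w; rewrite !memv_cap memv_ker lfunE memv0.
  case/andP => /andP [/mem_block [w11 _] /mem_block [w21 _]] /eqP w2.
  have : w.1 \in (<<B1>> :&: <<B2>>)%VS by rewrite memv_cap w11 w21.
  by rewrite capB memv0 => /eqP w1; apply/eqP/pair_eq0.
apply/dimvS/subvP => _ /memv_imgP [w /memv_capP [wB1 wB2] ->].
by rewrite lfunE memv_cap (mem_block wB1).2 (mem_block wB2).2.
Qed.
End ProductSpaces.
Arguments fstH {K uT vT}.
Arguments sndH {K uT vT}.

(* Two distinct codewords of the Koetter--Kschischang code meet in dimension
   at most k - 1: the first coordinates of their intersection form a
   subspace of roots of the nonzero q-polynomial f - g of q-degree < k. *)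
Lemma dim_cap_graph_linpoly (K : finFieldType) (L : fieldExtType K) (A : seq L)
    (k : nat) (c d : 'I_k -> L) :
  graph (linpoly c) A != graph (linpoly d) A ->
  (\dim (graph (linpoly c) A :&: graph (linpoly d) A) <= k - 1)%N.
Proof.
move=> neq_cd; rewrite -(dim_fst_graph (capvSl _ _)).
pose P := linpoly_poly c - linpoly_poly d.
have hornerP x : P.[x] = linpoly c x - linpoly d x.
  by rewrite hornerD hornerN !horner_linpoly_poly.
have nzP : P != 0.
  apply: contra_neq neq_cd => P0; rewrite /graph; congr (<<_>>%VS); apply: eq_map => a.
  have /esym/eqP := hornerP a; rewrite P0 horner0 subr_eq0 => /eqP cd_a.
  by congr (_, _); exact: cd_a.
have rootP : {in (fstH @: (graph (linpoly c) A :&: graph (linpoly d) A))%VS,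
                  forall z, root P z}.
  move=> _ /memv_imgP [w /memv_capP [wc wd] ->].
  by rewrite lfunE rootE hornerP -(mem_graph wc) -(mem_graph wd) subrr.
have sizeP : (size P <= (#|K| ^ k.-1).+1)%N.
  by rewrite (leq_trans (size_polyD _ _)) // size_polyN geq_max !size_linpoly_poly.
have := leq_trans (roots_in_subspace nzP rootP) sizeP.
by rewrite ltnS leq_exp2l ?finNzRing_gt1 // subn1.
Qed.

Section Transport.
Variables (K : fieldType) (uT vT wT : vectType K) (A : seq uT).
Variable phi : 'Hom((uT * vT)%type, wT).
Hypothesis phi_inj : forall v w : (uT * vT)%type,
  v.1 \in <<A>>%VS -> w.1 \in <<A>>%VS -> phi v = phi w -> v = w.

Definition inW (X : {vspace uT * vT}) := forall w, w \in X -> w.1 \in <<A>>%VS.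

Lemma inW_add X Y : inW X -> inW Y -> inW (X + Y)%VS.
Proof. by move=> WX WY _ /memv_addP [x /WX x1 [y /WY y1 ->]]; apply: rpredD. Qed.

Lemma dim_limg_inW X : inW X -> \dim (phi @: X) = \dim X.
Proof.
move=> WX; apply: limg_dim_eq; apply/eqP; rewrite -subv0; apply/subvP => v.
rewrite memv_cap memv_ker memv0 => /andP [vX /eqP phi_v0].
by apply/eqP/phi_inj; rewrite ?WX ?mem0v ?phi_v0 ?linear0.
Qed.

Lemma dim_limg_cap_inW X Y : inW X -> inW Y ->
  \dim (phi @: X :&: phi @: Y) = \dim (X :&: Y).
Proof.
move=> WX WY; apply/eqP; rewrite -(eqn_add2l (\dim (X + Y))) dimv_sum_cap.
by rewrite -(dim_limg_inW (inW_add WX WY)) limgD dimv_sum_cap !dim_limg_inW.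
Qed.

Lemma inW_graph (f : {linear uT -> vT}) : inW (graph f A).
Proof. exact: graph_fst. Qed.

Lemma inW_block B E : {subset B <= <<A>>%VS} -> inW (block B E).
Proof. by move=> /span_subvP /subvP sBA w /mem_block [/sBA]. Qed.
End Transport.

Lemma free_nth_sub (K : fieldType) (vT : vectType K) (A : seq vT) (J : seq nat) :
  free A -> uniq J -> {in J, forall j, j < size A}%N -> free [seq A`_j | j <- J].
Proof.
move=> fA uJ JA; have uA := free_uniq fA.
have /perm_free -> : perm_eq [seq A`_j | j <- J] [seq x <- A | x \in [seq A`_j | j <- J]].
  apply: uniq_perm; rewrite ?filter_uniq //.
    by rewrite map_inj_in_uniq // => i j /JA iA /JA jA /eqP; rewrite nth_uniq // => /eqP.
  by move=> x; rewrite mem_filter andb_idr // => /mapP [j /JA jA ->]; apply: mem_nth.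
exact: filter_free.
Qed.

Definition window (K : fieldType) (vT : vectType K) (A : seq vT) (h sg : nat)
  : seq vT := [seq A`_j | j <- iota (sg * h) h].

Lemma size_window (K : fieldType) (vT : vectType K) (A : seq vT) (h sg : nat) :
  size (window A h sg) = h.
Proof. by rewrite size_map size_iota. Qed.

Lemma iota_index (h sg j : nat) : j \in iota (sg * h) h -> (j %/ h)%N = sg.
Proof.
rewrite mem_iota => /andP [lo hi]; have h_gt0 : (0 < h)%N.
  by case: h {lo} hi; rewrite ?muln0.
apply/eqP; rewrite eqn_leq -ltnS ltn_divLR // leq_divRL // lo andbT.
by rewrite mulSn addnC.
Qed.

Section Windows.
Variables (K : fieldType) (vT : vectType K) (A : seq vT) (h : nat).
Hypothesis freeA : free A.

Definition window_fits sg := (sg * h + h <= size A)%N.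

Lemma window_in_range sg j :
  window_fits sg -> j \in iota (sg * h) h -> (j < size A)%N.
Proof. by move=> fits; rewrite mem_iota => /andP [_ /leq_trans]; apply. Qed.

Lemma free_window sg : window_fits sg -> free (window A h sg).
Proof.
by move=> fits; apply: free_nth_sub; rewrite ?iota_uniq // => j; apply: window_in_range.
Qed.

Lemma window_sub sg : window_fits sg -> {subset window A h sg <= <<A>>%VS}.
Proof.
by move=> fits _ /mapP [j /(window_in_range fits) jA ->]; apply/memv_span/mem_nth.
Qed.

Lemma window_cap sg tu : sg != tu -> window_fits sg -> window_fits tu ->
  (<<window A h sg>> :&: <<window A h tu>> = 0)%VS.
Proof.
move=> neq fits_sg fits_tu.
have disj : ~~ has (mem (iota (sg * h) h)) (iota (tu * h) h).
  apply/hasPn => j /iota_index tu_j; apply/negP => /iota_index sg_j.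
  by move: neq; rewrite -sg_j -tu_j eqxx.
have : free (window A h sg ++ window A h tu).
  rewrite /window -map_cat; apply: free_nth_sub; rewrite ?cat_uniq ?iota_uniq ?disj //.
  by move=> j; rewrite mem_cat => /orP []; apply: window_in_range.
by rewrite cat_free => /and3P [_ _ /directv_addP].
Qed.
End Windows.

Section Codewords.
Variables (K : finFieldType) (vT : vectType K) (L : fieldExtType K).
Variables (phi : 'Hom((L * L)%type, vT)) (A : seq L).
Hypothesis phi_inj : forall v w : (L * L)%type,
  v.1 \in <<A>>%VS -> w.1 \in <<A>>%VS -> phi v = phi w -> v = w.
Hypothesis freeA : free A.

Lemma dim_KKel k (c : 'I_k -> L) : \dim (KKel phi A c) = size A.
Proof.
rewrite (dim_limg_inW phi_inj); last exact: inW_graph.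
by rewrite dim_graph (eqP freeA).
Qed.

Lemma dim_cap_KKel k (c d : 'I_k -> L) :
  KKel phi A c != KKel phi A d -> (\dim (KKel phi A c :&: KKel phi A d) <= k - 1)%N.
Proof.
move=> neq_cd; rewrite (dim_limg_cap_inW phi_inj); try exact: inW_graph.
apply: dim_cap_graph_linpoly; apply: contra_neq neq_cd => eq_cd.
exact: (congr1 (lfun_img phi) eq_cd).
Qed.

Variable h : nat.

Definition block_codeword (sg : nat) (E : seq L) : {vspace vT} :=
  (phi @: block (window A h sg) E)%VS.

Section Fitting.
Variable sg : nat.
Hypothesis fits : window_fits A h sg.

Lemma inW_window_block (E : seq L) : inW A (block (window A h sg) E).
Proof. exact/inW_block/window_sub. Qed.

Lemma dim_block_codeword (E : seq L) :
  free E -> \dim (block_codeword sg E) = (h + size E)%N.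
Proof.
move=> freeE; rewrite (dim_limg_inW phi_inj) ?dim_block; last exact: inW_window_block.
by rewrite (eqP (free_window freeA fits)) (eqP freeE) size_window.
Qed.

Lemma dim_cap_KKel_block_codeword k (c : 'I_k -> L) (E : seq L) :
  (\dim (KKel phi A c :&: block_codeword sg E) <= h)%N.
Proof.
rewrite (dim_limg_cap_inW phi_inj); [| exact: inW_graph | exact: inW_window_block].
rewrite capvC; apply: leq_trans (dim_block_cap_graph _ _ _ _) _.
by rewrite (eqP (free_window freeA fits)) size_window.
Qed.
End Fitting.

Lemma dim_cap_block_codewords sg tu (E1 E2 : seq L) : sg != tu ->
  window_fits A h sg -> window_fits A h tu ->
  (\dim (block_codeword sg E1 :&: block_codeword tu E2) <= \dim (<<E1>> :&: <<E2>>))%N.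
Proof.
move=> neq fits_sg fits_tu.
rewrite (dim_limg_cap_inW phi_inj); [| exact: inW_window_block | exact: inW_window_block].
apply: dim_block_cap; exact: window_cap.
Qed.
End Codewords.

Local Close Scope ring_scope.

Lemma window_fits_index (l h N sg : nat) :
  sg < (if 0 < h then minn (l %/ h) N else N) -> sg * h + h <= l.
Proof.
case: (posnP h) => [-> | h_gt0]; first by rewrite muln0.
rewrite leq_min => /andP [sg_lt _]; rewrite addnC -mulSn.
by apply: leq_trans (leq_divM l h); rewrite leq_mul2r sg_lt orbT.
Qed.

Section KKCode.
Variables (K : finFieldType) (vT : vectType K) (l m k : nat) (L : fieldExtType K).
Variables (A : seq L) (phi : 'Hom((L * L)%type, vT)) (s : seq {vspace vT}).
Hypothesis KK : KKdata l m k A phi s.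

Lemma KKcode_dim U : U \in s -> \dim U = l.
Proof.
by case: KK => _ <- freeA [phi_inj _] mem_s /mem_s [c ->]; apply: dim_KKel.
Qed.

Lemma KKcode_cap U V : U \in s -> V \in s -> U != V -> \dim (U :&: V)%VS <= k - 1.
Proof.
case: KK => _ _ _ [phi_inj _] mem_s /mem_s [c ->] /mem_s [d ->].
exact: dim_cap_KKel.
Qed.
End KKCode.

(* Every code produced by the recursive construction consists of
   l-dimensional subspaces pairwise meeting in dimension at most k - 1.
   By induction: the inner code C[m,l-h,k] = D supplies the bound for two
   block codewords V_sigma, V_tau, since their bases span distinct U's. *)
Lemma RecCode_props (K : finFieldType) (vT : vectType K) l m k (C : seq {vspace vT}) :
  RecCode K vT l m k C ->
  (forall U, U \in C -> \dim U = l) /\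
  (forall U V, U \in C -> V \in C -> U != V -> \dim (U :&: V)%VS <= k - 1).
Proof.
elim=> {vT l m k C} [vT l m k h L A phi s KK _ _ | vT l m k h L A phi s D e KK].
  by split=> [U | U V]; [exact: (KKcode_dim KK) | exact: (KKcode_cap KK)].
move=> h_lt_k no_base _ [_ capD] N t basis_e V.
have [_ sizeA freeA [phi_inj _] mem_s] := KK.
have k_le_lh : k <= l - h by move: no_base; rewrite negb_or -!leqNgt => /andP [_].
have lt_t sg : sg \in iota 0 t -> sg < t by rewrite mem_iota.
have fits sg : sg \in iota 0 t -> window_fits A h sg.
  by rewrite /window_fits sizeA => /lt_t; apply: window_fits_index.
have defV sg : V sg = block_codeword phi A h sg (e sg).
  by rewrite /V /block_codeword /block /window -map_comp.
have t_le_N : t <= N by rewrite /t; case: ifP => _; rewrite ?geq_minr.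
have U_D sg : sg \in iota 0 t -> nth 0%VS (undup D) sg \in D.
  by move=> /lt_t sg_t; rewrite -mem_undup mem_nth ?(leq_trans sg_t).
have spanE sg : sg \in iota 0 t -> <<e sg>>%VS = nth 0%VS (undup D) sg.
  by move=> /lt_t sg_t; apply/span_basis; case: (basis_e sg sg_t).
split=> [U | U W].
  rewrite mem_cat => /orP [/(KKcode_dim KK) // | /mapP [sg sg_t ->]].
  have [size_e /basis_free free_e] := basis_e sg (lt_t _ sg_t).
  by rewrite defV (dim_block_codeword phi_inj freeA (fits _ sg_t)) // size_e; lia.
rewrite !mem_cat => /orP [Us | /mapP [sg sg_t ->]] /orP [Ws | /mapP [tu tu_t ->]] neqUW.
- exact: (KKcode_cap KK).
- have [c ->] := (mem_s _).1 Us.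
  rewrite defV (leq_trans (dim_cap_KKel_block_codeword phi_inj freeA (fits _ tu_t) _ _)) //.
  lia.
- have [c ->] := (mem_s _).1 Ws.
  rewrite capvC defV.
  rewrite (leq_trans (dim_cap_KKel_block_codeword phi_inj freeA (fits _ sg_t) _ _)) //.
  lia.
have neq : sg != tu by apply: contra_neq neqUW => ->.
have cap_VV := dim_cap_block_codewords phi_inj freeA (e sg) (e tu) neq (fits _ sg_t) (fits _ tu_t).
rewrite !defV (leq_trans cap_VV) //.
rewrite !spanE //; apply: capD; rewrite ?U_D //.
by rewrite nth_uniq ?undup_uniq ?(leq_trans (lt_t _ _) t_le_N).
Qed.

Theorem mainTheorem2 (K : finFieldType) (vT : vectType K) (l m k : nat)
    (C : seq {vspace vT}) :
    (1 <= k)%N -> (k <= l)%N -> (l <= m)%N ->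
    RecCode K vT l m k C ->
    [/\ (forall U, U \in C -> \dim U = l),
        (forall U V, U \in C -> V \in C -> U != V -> (\dim (U :&: V)%VS <= k - 1)%N)
      & (forall U V, U \in C -> V \in C -> U != V ->
           (2 * (l - k + 1) <= subspace_dist U V)%N)].
Proof.
move=> k_gt0 k_le_l _ /RecCode_props [dimC capC]; split=> // U V UC VC neqUV.
have := capC _ _ UC VC neqUV.
by rewrite /subspace_dist (dimC _ UC) (dimC _ VC); lia.
Qed.
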